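(* Assume $T$ and $D$ are known and set $$\eta=\frac{1}{4e\beta},\qquad \beta=\sqrt{\frac{\frac{eKT/2+D}{4e}+D}{4e\ln K}}.$$ Then the expected regret of Skipper$(\beta,\mathrm{DEW}(\eta,\beta))$ against an oblivious adversary satisfies $$\bar{\mathcal R}_T\le 2\sqrt{\left(\frac{KTe}{2}+(1+4e)D\right)\ln K}.$$
   Context: Setting: fix integers $K\ge 2$, $T\ge 1$, and write $[K]=\{1,\dots,K\}$. An oblivious adversary fixes in advance losses $\ell_t^a\in[0,1]$ for $t=1,2,\dots$, $a\in[K]$, and nonnegative integer delays $d_1,d_2,\dots$. In each round $t$ the learner picks (possibly at random) an action $A_t\in[K]$ and suffers loss $\ell_t^{A_t}$; at the end of round $t$ (after $A_t$ has been chosen) it observes the pairs $(s,\ell_s^{A_s})$ for all $s\le t$ with $s+d_s=t$. The expected regret is $\bar{\mathcal R}_T=\mathbb E\big[\sum_{t=1}^T\ell_t^{A_t}\big]-\min_{a\in[K]}\sum_{t=1}^T\ell_t^a$, the expectation being over the learner's randomization. $D=\sum_{t=1}^T d_t$. Algorithm DEW (delayed exponential weights) with inputs $\eta>0$ and $d_{\max}$: set $\eta'=\min\{\eta,(4e\,d_{\max})^{-1}\}$ and $w_0^a=1$ for all $a$. For $t=1,2,\dots$: let $p_t^a=w_{t-1}^a/\sum_b w_{t-1}^b$; draw $A_t\sim p_t$ and play it; at the end of round $t$, for every received pair $(s,\ell_s^{A_s})$ form the estimates $\hat\ell_s^a=\ell_s^a\mathbb 1(a=A_s)/p_s^a$ for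 all $a$; update $w_t^a=w_{t-1}^a\exp\big(-\eta'\sum_{s}\hat\ell_s^a\big)$, the sum over pairs received at the end of round $t$. Skipper$(\beta,\mathcal A)$ with threshold $\beta>0$ and base algorithm $\mathcal A$: in every round $t$ it plays the action $A_t$ proposed by $\mathcal A$, and at the end of round $t$ it passes to $\mathcal A$ exactly those observed pairs $(s,\ell_s^{A_s})$ with $s+d_s=t$ and $d_s<\beta$. Skipper$(\beta,\mathrm{DEW}(\eta,\beta))$ denotes Skipper with threshold $\beta$ wrapping DEW with learning rate $\eta$ and $d_{\max}=\beta$. *)

From Stdlib Require Import Reals List Arith.
Import ListNotations.
Open Scope R_scope.

Fixpoint rsum (n : nat) (f : nat -> R) : R :=
  match n with O => 0 | S m => rsum m f + f m end.

Fixpoint rprod (n : nat) (f : nat -> R) : R :=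
  match n with O => 1 | S m => rprod m f * f m end.

(* Actions are 0..K-1, rounds are 1,2,...; l t a = loss of action a at round t,
   d t = delay of round t.  A : nat -> nat gives the learner's action at each round. *)

Definition dew_rate (eta dmax : R) : R := Rmin eta (/ (4 * exp 1 * dmax)).

(* Weights of DEW(eta, dmax) wrapped in Skipper(beta).
   dew_W ... n s a = w_s^a for every s <= n (for s > n it is w_n^a).
   At the end of round n, the pairs (s, l_s^{A_s}) with s >= 1, s + d_s = n and
   d_s < beta are passed to DEW, which updates with the importance-weighted
   estimates l_s^a 1(a = A_s) / p_s^a. *)
Fixpoint dew_W (K : nat) (l : nat -> nat -> R) (d : nat -> nat)
    (etap beta : R) (A : nat -> nat) (n : nat) : nat -> nat -> R :=
  match n with
  | O => fun _ _ => 1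
  | S m =>
      let Wm := dew_W K l d etap beta A m in
      fun s a =>
        if Nat.leb s m then Wm s a
        else
          Wm m a *
          exp (- etap *
               rsum (S n) (fun s' =>
                 if (Nat.leb 1 s' && Nat.eqb (s' + d s') n)%bool then
                   if Rlt_dec (INR (d s')) beta then
                     (* p_{s'}^a = w_{s'-1}^a / sum_b w_{s'-1}^b *)
                     l s' a * (if Nat.eqb a (A s') then 1 else 0)
                       / (Wm (s' - 1)%nat a / rsum K (fun b => Wm (s' - 1)%nat b))
                   else 0
                 else 0))
  end.

Definition dew_prob (K : nat) (l : nat -> nat -> R) (d : nat -> nat)
    (etap beta : R) (A : nat -> nat) (t a : nat) : R :=
  let W := dew_W K l d etap beta A (t - 1)%nat in
  W (t - 1)%nat a / rsum K (fun b => W (t - 1)%nat b).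

Fixpoint all_seqs (T K : nat) : list (list nat) :=
  match T with
  | O => [nil]
  | S T' => flat_map (fun h => map (fun a => h ++ [a]) (seq 0 K)) (all_seqs T' K)
  end.

Definition act_of (h : list nat) (s : nat) : nat := nth (s - 1)%nat h O.

(* E[ sum_{t=1}^T l_t^{A_t} ] for Skipper(beta, DEW(eta, dmax)):
   sum over all action sequences of (probability of the sequence) * (its loss). *)
Definition expected_loss (K T : nat) (l : nat -> nat -> R) (d : nat -> nat)
    (eta dmax beta : R) : R :=
  let etap := dew_rate eta dmax in
  fold_right
    (fun h acc =>
       let A := act_of h in
       acc + rprod T (fun i => dew_prob K l d etap beta A (S i) (A (S i)))
             * rsum T (fun i => l (S i) (A (S i))))
    0 (all_seqs T K).

Definition cum_loss (T : nat) (l : nat -> nat -> R) (a : nat) : R :=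
  rsum T (fun i => l (S i) a).

Definition best_loss (K T : nat) (l : nat -> nat -> R) : R :=
  fold_right Rmin (cum_loss T l O) (map (cum_loss T l) (seq 0 K)).

Definition regret_skipper_dew (K T : nat) (l : nat -> nat -> R) (d : nat -> nat)
    (eta dmax beta : R) : R :=
  expected_loss K T l d eta dmax beta - best_loss K T l.

Definition total_delay (T : nat) (d : nat -> nat) : R :=
  rsum T (fun i => INR (d (S i))).

From Stdlib Require Import Reals List Arith Lia Lra FunctionalExtensionality.
Import ListNotations.
Open Scope R_scope.

(* Skipper discards every round with delay at least beta, and each discarded round
   costs at most 1 <= d_t / beta.  On the kept rounds DEW is compared with a virtual,
   undelayed exponential-weights run on the same importance-weighted estimates: the
   virtual weights are the DEW weights times exp (- eta * outstanding estimates).  The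
   potential argument bounds the virtual regret by ln K / eta + eta (e / 2) K T, and the
   gap between played and virtual distributions costs eta per outstanding round, at most
   eta D in total.  The stability fact behind both estimates is that, as
   eta beta = 1 / (4 e), the total DEW weight cannot halve within beta rounds; hence an
   outstanding estimate weighs at most 2 under the current distribution and the virtual
   distribution is at most e / 2 times the played one.  The chosen beta balances
   ln K / eta + eta (e K T / 2 + D) + D / beta. *)

(** * Finite sums and elementary inequalities *)

Lemma rsum_ext n f g : (forall i, (i < n)%nat -> f i = g i) -> rsum n f = rsum n g.
Proof.
  induction n as [|n IH]; simpl; intros H; auto.
  rewrite IH by (intros; apply H; lia). now rewrite H by lia.
Qed.

Lemma rsum_le n f g : (forall i, (i < n)%nat -> f i <= g i) -> rsum n f <= rsum n g.
Proof.
  induction n as [|n IH]; simpl; intros H; [lra|].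
  pose proof (IH (fun i Hi => H i ltac:(lia))). pose proof (H n ltac:(lia)). lra.
Qed.

Lemma rsum_add n f g : rsum n (fun i => f i + g i) = rsum n f + rsum n g.
Proof. induction n as [|n IH]; simpl; [lra|]. rewrite IH; lra. Qed.

Lemma rsum_sub n f g : rsum n (fun i => f i - g i) = rsum n f - rsum n g.
Proof. induction n as [|n IH]; simpl; [lra|]. rewrite IH; lra. Qed.

Lemma rsum_mull n c f : rsum n (fun i => c * f i) = c * rsum n f.
Proof. induction n as [|n IH]; simpl; [lra|]. rewrite IH; lra. Qed.

Lemma rsum_mulr n c f : rsum n (fun i => f i * c) = rsum n f * c.
Proof. induction n as [|n IH]; simpl; [lra|]. rewrite IH; lra. Qed.

Lemma rsum_const n c : rsum n (fun _ => c) = INR n * c.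
Proof. induction n as [|n IH]; simpl rsum; [simpl; lra|]. rewrite IH, S_INR; lra. Qed.

Lemma rsum_zero n : rsum n (fun _ => 0) = 0.
Proof. rewrite rsum_const; ring. Qed.

Lemma rsum_nonneg n f : (forall i, (i < n)%nat -> 0 <= f i) -> 0 <= rsum n f.
Proof. intros H. rewrite <- (rsum_zero n). now apply rsum_le. Qed.

Lemma rsum_pos n f : (1 <= n)%nat -> (forall i, (i < n)%nat -> 0 < f i) -> 0 < rsum n f.
Proof.
  intros Hn H. destruct n as [|n]; [lia|]. simpl.
  assert (0 <= rsum n f) by (apply rsum_nonneg; intros; apply Rlt_le, H; lia).
  specialize (H n ltac:(lia)). lra.
Qed.

Lemma rsum_term_le n f i :
  (forall j, (j < n)%nat -> 0 <= f j) -> (i < n)%nat -> f i <= rsum n f.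
Proof.
  induction n as [|n IH]; intros H Hi; [lia|]. simpl.
  assert (0 <= rsum n f) by (apply rsum_nonneg; intros; apply H; lia).
  destruct (Nat.eq_dec i n) as [->|Hin]; [lra|].
  specialize (IH (fun j Hj => H j ltac:(lia)) ltac:(lia)). specialize (H n ltac:(lia)). lra.
Qed.

Lemma rsum_swap n m (f : nat -> nat -> R) :
  rsum n (fun i => rsum m (fun j => f i j)) = rsum m (fun j => rsum n (fun i => f i j)).
Proof.
  induction n as [|n IH]; simpl; [now rewrite rsum_zero|].
  now rewrite IH, <- rsum_add.
Qed.

Lemma rsum_first n f : rsum (S n) f = f O + rsum n (fun j => f (S j)).
Proof. induction n as [|n IH]; simpl in *; [lra|]. rewrite IH; lra. Qed.

Lemma rsum_delta K b (F : nat -> R -> R) : (b < K)%nat -> (forall a, F a 0 = 0) ->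
  rsum K (fun a => F a (if a =? b then 1 else 0)) = F b 1.
Proof.
  induction K as [|K IH]; intros Hb HF0; [lia|]. simpl.
  destruct (Nat.eq_dec b K) as [->|HbK].
  - rewrite Nat.eqb_refl, (rsum_ext _ _ (fun _ => 0)), rsum_zero; [lra|].
    intros i Hi. destruct (Nat.eqb_spec i K); [lia|auto].
  - rewrite IH by (auto; lia). destruct (Nat.eqb_spec K b); [lia|]. rewrite HF0; lra.
Qed.

Lemma rsum_indicator_le K b c : 0 <= c ->
  rsum K (fun a => (if a =? b then 1 else 0) * c) <= c.
Proof.
  intros Hc. destruct (Nat.lt_ge_cases b K).
  - rewrite (rsum_delta K b (fun _ x => x * c)) by (auto; intros; ring). lra.
  - rewrite (rsum_ext _ _ (fun _ => 0)), rsum_zero; [lra|].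
    intros i Hi. destruct (Nat.eqb_spec i b); [lia|ring].
Qed.

Lemma count_above_le n a :
  rsum (S n) (fun x => if Rlt_dec a (INR x) then 1 else 0) <= Rmax 0 (INR n - a + 1).
Proof.
  induction n as [|n IH].
  - simpl rsum. replace (INR 0) with 0 by reflexivity.
    destruct (Rlt_dec a 0); unfold Rmax; destruct (Rle_dec 0 (0 - a + 1)); lra.
  - change (rsum (S (S n)) ?f) with (rsum (S n) f + f (S n)). rewrite S_INR.
    destruct (Rlt_dec a (INR (S n))) as [r|r]; rewrite ?S_INR in r; unfold Rmax in *;
    destruct (Rle_dec 0 (INR n - a + 1)); destruct (Rle_dec 0 (INR n + 1 - a + 1)); lra.
Qed.

Lemma count_window_le T x w :
  rsum T (fun i => if ((x <? S i) && (S i <=? x + w))%bool then 1 else 0) <= INR w.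
Proof.
  enough (H : rsum T (fun i => if ((x <? S i) && (S i <=? x + w))%bool then 1 else 0)
              <= INR (Nat.min w (T - x))).
  { eapply Rle_trans; [exact H|]. apply le_INR; lia. }
  induction T as [|T IH]; [apply pos_INR|].
  change (rsum (S T) ?f) with (rsum T f + f T); cbv beta.
  assert (INR (Nat.min w (T - x)) <= INR (Nat.min w (S T - x))) by (apply le_INR; lia).
  destruct (Nat.ltb_spec x (S T)); destruct (Nat.leb_spec (S T) (x + w)); cbn [andb]; [|lra..].
  replace (Nat.min w (S T - x)) with (S (Nat.min w (T - x))) by lia. rewrite S_INR. lra.
Qed.

Lemma Rdiv_nonneg a b : 0 <= a -> 0 < b -> 0 <= a / b.
Proof. intros. apply Rmult_le_pos; [auto|]. now apply Rlt_le, Rinv_0_lt_compat. Qed.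

Lemma ln_div a b : 0 < a -> 0 < b -> ln (a / b) = ln a - ln b.
Proof.
  intros. unfold Rdiv. rewrite ln_mult, ln_Rinv by (auto; now apply Rinv_0_lt_compat). ring.
Qed.

Lemma ln_le_sub_1 u : 0 < u -> ln u <= u - 1.
Proof. intros Hu. pose proof (exp_ineq1_le (ln u)). rewrite exp_ln in H; lra. Qed.

Lemma exp_neg_le_quadratic z : 0 <= z -> exp (- z) <= 1 - z + z ^ 2.
Proof.
  intros Hz.
  assert (Hsq : (1 + z / 2) ^ 2 <= exp z).
  { replace z with (z / 2 + z / 2) at 2 by field. rewrite exp_plus.
    pose proof (exp_ineq1_le (z / 2)). simpl. nra. }
  rewrite exp_Ropp. pose proof (exp_pos z).
  apply Rmult_le_reg_l with (exp z); auto. rewrite Rinv_r by lra.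
  apply Rle_trans with ((1 + z / 2) ^ 2 * (1 - z + z ^ 2)); [simpl; nra|].
  apply Rmult_le_compat_r; [nra|auto].
Qed.

Lemma exp_1_ge_5_2 : 5 / 2 <= exp 1.
Proof.
  (* (1 + 1/8)^8 > 5/2 and exp (1/8) >= 1 + 1/8. *)
  set (a := exp (1 / 8)).
  assert (Ha : 9 / 8 <= a) by (pose proof (exp_ineq1_le (1 / 8)); unfold a; lra).
  replace (exp 1) with (a * a * (a * a) * (a * a * (a * a)))
    by (unfold a; rewrite <- !exp_plus; f_equal; lra).
  assert (9 / 8 * (9 / 8) <= a * a) by nra.
  assert (9 / 8 * (9 / 8) * (9 / 8 * (9 / 8)) <= a * a * (a * a)) by nra.
  nra.
Qed.

(** * Sums over lists and action sequences *)

Definition lsum {X : Type} (L : list X) (g : X -> R) : R :=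
  fold_right (fun x acc => acc + g x) 0 L.

Lemma lsum_app {X} (L1 L2 : list X) g : lsum (L1 ++ L2) g = lsum L1 g + lsum L2 g.
Proof. induction L1 as [|x L1 IH]; simpl; [lra|]. unfold lsum in *. simpl. rewrite IH. lra. Qed.

Lemma lsum_map {X Y} (f : X -> Y) L g : lsum (map f L) g = lsum L (fun x => g (f x)).
Proof. induction L as [|x L IH]; [reflexivity|]. unfold lsum in *; simpl. now rewrite IH. Qed.

Lemma lsum_flat_map {X Y} (f : X -> list Y) L g :
  lsum (flat_map f L) g = lsum L (fun x => lsum (f x) g).
Proof.
  induction L as [|x L IH]; [reflexivity|]. cbn [flat_map]. rewrite lsum_app, IH.
  change (lsum (x :: L) ?h) with (lsum L h + h x). lra.
Qed.

Lemma lsum_seq n g : lsum (seq 0 n) g = rsum n g.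
Proof.
  induction n as [|n IH]; [reflexivity|]. rewrite seq_S, lsum_app, IH.
  change (lsum [n] ?h) with (0 + h n). simpl. lra.
Qed.

Lemma lsum_ext {X} (L : list X) g g' : (forall x, In x L -> g x = g' x) -> lsum L g = lsum L g'.
Proof.
  induction L as [|x L IH]; intros H; [reflexivity|]. unfold lsum in *; simpl.
  rewrite IH, H; auto; [now left|]. intros; apply H; now right.
Qed.

Lemma lsum_le {X} (L : list X) g g' : (forall x, In x L -> g x <= g' x) -> lsum L g <= lsum L g'.
Proof.
  induction L as [|x L IH]; intros H; [unfold lsum; simpl; lra|]. unfold lsum in *; simpl.
  assert (g x <= g' x) by (apply H; now left).
  assert (fold_right (fun x acc => acc + g x) 0 L <= fold_right (fun x acc => acc + g' x) 0 L)
    by (apply IH; intros; apply H; now right).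
  lra.
Qed.

Lemma lsum_add {X} (L : list X) g g' : lsum L (fun x => g x + g' x) = lsum L g + lsum L g'.
Proof. induction L as [|x L IH]; unfold lsum in *; simpl; [lra|]. rewrite IH. lra. Qed.

Lemma lsum_mull {X} (L : list X) c g : lsum L (fun x => c * g x) = c * lsum L g.
Proof. induction L as [|x L IH]; unfold lsum in *; simpl; [lra|]. rewrite IH. lra. Qed.

Lemma rprod_ext n f g : (forall i, (i < n)%nat -> f i = g i) -> rprod n f = rprod n g.
Proof.
  induction n as [|n IH]; simpl; intros H; auto.
  rewrite IH by (intros; apply H; lia). now rewrite H by lia.
Qed.

Lemma all_seqs_length n K h : In h (all_seqs n K) -> length h = n.
Proof.
  revert h. induction n as [|n IH]; simpl; intros h Hh.
  - now destruct Hh as [<-|[]].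
  - apply in_flat_map in Hh. destruct Hh as [h0 [H0 H1]].
    apply in_map_iff in H1. destruct H1 as [a [<- _]].
    rewrite length_app, (IH h0 H0). simpl. lia.
Qed.

Lemma act_of_snoc_lt h a s : (1 <= s <= length h)%nat -> act_of (h ++ [a]) s = act_of h s.
Proof. intros. unfold act_of. apply app_nth1. lia. Qed.

Lemma act_of_snoc_last h a : act_of (h ++ [a]) (S (length h)) = a.
Proof.
  unfold act_of. replace (S (length h) - 1)%nat with (length h) by lia.
  rewrite app_nth2, Nat.sub_diag by lia. reflexivity.
Qed.

Lemma act_of_overflow h s : (length h < s)%nat -> act_of h s = O.
Proof. intros. unfold act_of. apply nth_overflow. lia. Qed.

Lemma act_of_snoc_agree x h h' a : length h = length h' ->
  (forall s, (1 <= s)%nat -> s <> x -> act_of h s = act_of h' s) ->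
  forall s, (1 <= s)%nat -> s <> x -> act_of (h ++ [a]) s = act_of (h' ++ [a]) s.
Proof.
  intros Hlen H s H1 H2. destruct (Nat.le_gt_cases s (length h)).
  - rewrite !act_of_snoc_lt by lia. auto.
  - destruct (Nat.eq_dec s (S (length h))) as [->|Hs].
    + rewrite act_of_snoc_last, Hlen, act_of_snoc_last. reflexivity.
    + rewrite !act_of_overflow; auto; rewrite length_app; simpl; lia.
Qed.

Lemma best_loss_attained K T l : (1 <= K)%nat ->
  exists astar, (astar < K)%nat /\ best_loss K T l = cum_loss T l astar.
Proof.
  intros HK. unfold best_loss. generalize (seq 0 K) (fun x => proj1 (in_seq K 0 x)).
  intros L HL. induction L as [|x L IH]; simpl; [exists O; split; auto; lia|].
  destruct IH as [a [Ha E]]; [intros y Hy; apply HL; now right|]. rewrite E.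
  destruct (Rle_dec (cum_loss T l x) (cum_loss T l a)).
  - exists x. split; [specialize (HL x (or_introl eq_refl)); lia|]. now apply Rmin_left.
  - exists a. split; auto. apply Rmin_right; lra.
Qed.

(** * Exponential weights without delay *)

Section Hedge.
Variables (K : nat) (e : R) (y : nat -> nat -> R).

Definition hedge_weight s a : R := exp (- e * rsum s (fun x => y x a)).
Definition hedge_prob s a : R := hedge_weight s a / rsum K (hedge_weight s).

Hypothesis HK : (1 <= K)%nat.

Lemma hedge_weight_pos s a : 0 < hedge_weight s a.
Proof. apply exp_pos. Qed.

Lemma hedge_total_pos s : 0 < rsum K (hedge_weight s).
Proof. apply rsum_pos; auto. intros; apply hedge_weight_pos. Qed.

Lemma hedge_prob_nonneg s a : 0 <= hedge_prob s a.
Proof. apply Rlt_le, Rdiv_lt_0_compat; [apply hedge_weight_pos|apply hedge_total_pos]. Qed.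

Lemma hedge_prob_sum s : rsum K (hedge_prob s) = 1.
Proof.
  unfold hedge_prob, Rdiv. rewrite rsum_mulr. apply Rinv_r, Rgt_not_eq, hedge_total_pos.
Qed.

Hypotheses (He : 0 < e) (Hy : forall s a, 0 <= y s a).

Lemma hedge_potential_step s :
  ln (rsum K (hedge_weight (S s))) - ln (rsum K (hedge_weight s)) <=
  - e * rsum K (fun a => hedge_prob s a * y s a)
  + e ^ 2 * rsum K (fun a => hedge_prob s a * y s a ^ 2).
Proof.
  pose proof (hedge_total_pos s). pose proof (hedge_total_pos (S s)).
  rewrite <- ln_div by auto.
  eapply Rle_trans; [apply ln_le_sub_1, Rdiv_lt_0_compat; auto|].
  assert (Hratio : rsum K (hedge_weight (S s)) / rsum K (hedge_weight s) =
                   rsum K (fun a => hedge_prob s a * exp (- (e * y s a)))).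
  { unfold hedge_prob, Rdiv. rewrite <- rsum_mulr. apply rsum_ext. intros a _.
    unfold hedge_weight. change (rsum (S s) ?f) with (rsum s f + f s). cbv beta.
    rewrite Rmult_plus_distr_l, <- Ropp_mult_distr_l, <- Ropp_mult_distr_l, exp_plus.
    rewrite Ropp_mult_distr_l. ring. }
  assert (Hquad : rsum K (fun a => hedge_prob s a * exp (- (e * y s a))) <=
                  rsum K (fun a => hedge_prob s a + (- e * (hedge_prob s a * y s a)
                                   + e ^ 2 * (hedge_prob s a * y s a ^ 2)))).
  { apply rsum_le. intros a _.
    pose proof (exp_neg_le_quadratic (e * y s a) ltac:(specialize (Hy s a); nra)).
    pose proof (hedge_prob_nonneg s a).
    replace (hedge_prob s a + (- e * (hedge_prob s a * y s a) + e ^ 2 * (hedge_prob s a * y s a ^ 2)))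
      with (hedge_prob s a * (1 - e * y s a + (e * y s a) ^ 2)) by ring.
    now apply Rmult_le_compat_l. }
  rewrite !rsum_add, !rsum_mull, hedge_prob_sum in Hquad. lra.
Qed.

Lemma hedge_regret (n astar : nat) : (astar < K)%nat ->
  rsum n (fun s => rsum K (fun a => hedge_prob s a * y s a)) <=
  ln (INR K) / e + rsum n (fun s => y s astar)
  + e * rsum n (fun s => rsum K (fun a => hedge_prob s a * y s a ^ 2)).
Proof.
  intros Ha.
  assert (Hinit : rsum K (hedge_weight O) = INR K).
  { rewrite (rsum_ext _ _ (fun _ => 1)), rsum_const; [ring|].
    intros. unfold hedge_weight. simpl rsum. rewrite Rmult_0_r. apply exp_0. }
  assert (Htele : ln (rsum K (hedge_weight n)) - ln (INR K) <=
     - e * rsum n (fun s => rsum K (fun a => hedge_prob s a * y s a))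
     + e ^ 2 * rsum n (fun s => rsum K (fun a => hedge_prob s a * y s a ^ 2))).
  { rewrite <- Hinit, <- !rsum_mull, <- rsum_add. induction n as [|n IH]; [simpl; lra|].
    change (rsum (S n) ?f) with (rsum n f + f n). pose proof (hedge_potential_step n). lra. }
  assert (Hlow : - e * rsum n (fun s => y s astar) <= ln (rsum K (hedge_weight n))).
  { replace (- e * rsum n (fun s => y s astar)) with (ln (hedge_weight n astar))
      by apply ln_exp.
    assert (Hterm : hedge_weight n astar <= rsum K (hedge_weight n))
      by (apply rsum_term_le; auto; intros; apply Rlt_le, hedge_weight_pos).
    destruct (Rle_lt_or_eq_dec _ _ Hterm) as [Hlt|Heq]; [|rewrite <- Heq; lra].
    apply Rlt_le, ln_increasing; [apply hedge_weight_pos|exact Hlt]. }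
  apply Rmult_le_reg_l with e; auto.
  replace (e * (ln (INR K) / e + rsum n (fun s => y s astar)
             + e * rsum n (fun s => rsum K (fun a => hedge_prob s a * y s a ^ 2))))
    with (ln (INR K) + e * rsum n (fun s => y s astar)
          + e ^ 2 * rsum n (fun s => rsum K (fun a => hedge_prob s a * y s a ^ 2)))
    by (field; lra).
  lra.
Qed.

End Hedge.

(** * Counting delayed rounds *)

Section Delays.
Variables (d : nat -> nat) (beta : R).

Definition kept x : R := if Rlt_dec (INR (d x)) beta then 1 else 0.
Definition counted x : R := if 1 <=? x then kept x else 0.
Definition arrivals n : R := rsum (S n) (fun x => if x + d x =? n then counted x else 0).
Definition arrivals_in m n : R :=
  rsum (S n) (fun x => if ((m <? x + d x) && (x + d x <=? n))%bool then counted x else 0).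
(* Feedback of round x arrives at the end of round x + d x, so at round s it is still
   missing iff s <= x + d x. *)
Definition outstanding s : R := rsum s (fun x => if s <=? x + d x then counted x else 0).

Hypothesis Hb : 0 < beta.

Lemma kept_cases x : kept x = 0 \/ kept x = 1.
Proof. unfold kept; destruct Rlt_dec; auto. Qed.

Lemma counted_nonneg x : 0 <= counted x.
Proof. unfold counted. destruct (1 <=? x)%nat; [destruct (kept_cases x) as [->| ->]|]; lra. Qed.

Lemma arrivals_nonneg n : 0 <= arrivals n.
Proof. apply rsum_nonneg. intros. destruct (_ =? _)%nat; [apply counted_nonneg|lra]. Qed.

Lemma arrivals_in_empty m : arrivals_in m m = 0.
Proof.
  unfold arrivals_in. rewrite (rsum_ext _ _ (fun _ => 0)), rsum_zero; auto. intros x _.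
  destruct (Nat.ltb_spec m (x + d x)); destruct (Nat.leb_spec (x + d x) m); cbn [andb]; auto; lia.
Qed.

Lemma arrivals_in_succ m n : (m <= n)%nat ->
  arrivals_in m (S n) = arrivals_in m n + arrivals (S n).
Proof.
  intros H. unfold arrivals_in, arrivals.
  rewrite (rsum_ext (S (S n)) _ (fun x =>
     (if ((m <? x + d x) && (x + d x <=? n))%bool then counted x else 0)
     + (if x + d x =? S n then counted x else 0))).
  2: { intros x _.
       destruct (Nat.ltb_spec m (x + d x)); destruct (Nat.leb_spec (x + d x) (S n));
         destruct (Nat.leb_spec (x + d x) n); destruct (Nat.eqb_spec (x + d x) (S n));
         cbn [andb]; try lia; ring. }
  rewrite rsum_add. f_equal.
  change (rsum (S (S n)) ?f) with (rsum (S n) f + f (S n)). cbv beta.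
  destruct (Nat.leb_spec (S n + d (S n)) n); [lia|]. rewrite Bool.andb_false_r. ring.
Qed.

(* A kept round arriving in (m, n] was played after m - beta. *)
Lemma arrivals_in_le m n : (m <= n)%nat -> arrivals_in m n <= INR (n - m) + beta.
Proof.
  intros H. unfold arrivals_in.
  apply Rle_trans with (rsum (S n) (fun x => if Rlt_dec (INR m + 1 - beta) (INR x) then 1 else 0)).
  - apply rsum_le. intros x Hx. unfold counted, kept.
    destruct (Nat.ltb_spec m (x + d x)); destruct (Nat.leb_spec (x + d x) n); cbn [andb];
      destruct (1 <=? x)%nat; destruct (Rlt_dec (INR (d x)) beta) as [Hd|Hd];
      destruct Rlt_dec as [Hq|Hq]; try lra.
    exfalso. apply Hq. assert (Hmx : INR (m + 1) <= INR (x + d x)) by (apply le_INR; lia).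
    rewrite !plus_INR in Hmx. simpl in Hmx. lra.
  - eapply Rle_trans; [apply count_above_le|]. rewrite minus_INR by auto.
    unfold Rmax. pose proof (le_INR _ _ H). destruct Rle_dec; lra.
Qed.

Lemma outstanding_as_window T i : (i < T)%nat ->
  outstanding (S i) = rsum (S T) (fun x => if ((x <? S i) && (S i <=? x + d x))%bool then counted x else 0).
Proof.
  intros Hi. unfold outstanding. symmetry.
  assert (Hext : forall m, (S i <= m)%nat ->
            rsum m (fun x => if ((x <? S i) && (S i <=? x + d x))%bool then counted x else 0)
            = rsum (S i) (fun x => if S i <=? x + d x then counted x else 0)).
  { induction 1 as [|m Hm IH].
    - apply rsum_ext. intros x Hx. destruct (Nat.ltb_spec x (S i)); [reflexivity|lia].
    - change (rsum (S m) ?f) with (rsum m f + f m). cbv beta. rewrite IH.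
      destruct (Nat.ltb_spec m (S i)); [lia|]. cbn [andb]. ring. }
  apply Hext. lia.
Qed.

(* A kept round x is outstanding during the d_x rounds after it was played. *)
Lemma outstanding_total_le T :
  rsum T (fun i => outstanding (S i)) <= rsum T (fun i => kept (S i) * INR (d (S i))).
Proof.
  rewrite (rsum_ext _ _ _ (outstanding_as_window T)), rsum_swap, rsum_first.
  rewrite (rsum_ext T (fun i => if ((0 <? S i) && (S i <=? 0 + d 0))%bool then counted 0 else 0)
             (fun _ => 0)), rsum_zero, Rplus_0_l
    by (intros; change (counted 0) with 0; now destruct (_ && _)%bool).
  apply rsum_le. intros j Hj. unfold counted. simpl (1 <=? S j)%nat.
  rewrite (rsum_ext T _ (fun i => kept (S j)
             * (if ((S j <? S i) && (S i <=? S j + d (S j)))%bool then 1 else 0)))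
    by (intros; destruct (_ && _)%bool; ring).
  rewrite rsum_mull. pose proof (count_window_le T (S j) (d (S j))).
  apply Rmult_le_compat_l; [destruct (kept_cases (S j)) as [-> | ->]; lra|auto].
Qed.

(* A skipped round has d_x >= beta and so costs at most d_x / beta. *)
Lemma delay_cost_le T e : 0 <= e ->
  rsum T (fun i => (1 - kept (S i)) + e * outstanding (S i)) <= (e + / beta) * total_delay T d.
Proof.
  intros He. pose proof (outstanding_total_le T). unfold total_delay.
  rewrite rsum_add, rsum_mull.
  assert (Hround : forall i, (1 - kept (S i)) + e * (kept (S i) * INR (d (S i)))
                             <= (e + / beta) * INR (d (S i))).
  { intros i. unfold kept. pose proof (pos_INR (d (S i))). pose proof (Rinv_0_lt_compat _ Hb).
    destruct Rlt_dec; [nra|].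
    assert (1 <= / beta * INR (d (S i))).
    { apply Rmult_le_reg_l with beta; auto. rewrite <- Rmult_assoc, Rinv_r; lra. }
    nra. }
  assert (Hsum : rsum T (fun i => 1 - kept (S i)) + rsum T (fun i => e * (kept (S i) * INR (d (S i))))
                 <= (e + / beta) * rsum T (fun i => INR (d (S i)))).
  { rewrite <- rsum_add, <- rsum_mull. apply rsum_le. intros; apply Hround. }
  rewrite rsum_mull in Hsum.
  assert (e * rsum T (fun i => outstanding (S i)) <= e * rsum T (fun i => kept (S i) * INR (d (S i))))
    by (apply Rmult_le_compat_l; lra).
  lra.
Qed.

End Delays.

(** * Skipper wrapped around DEW *)

Section Skipper_DEW.
Variables (K : nat) (l : nat -> nat -> R) (d : nat -> nat) (e beta : R).
Hypothesis HK : (1 <= K)%nat.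
Hypothesis Hl : forall t a, 0 <= l t a <= 1.
Hypothesis Hb : 0 < beta.
Hypothesis He : e = / (4 * exp 1 * beta).

Definition weight A n a : R := dew_W K l d e beta A n n a.
Definition total_weight A n : R := rsum K (weight A n).
Definition play_prob A t a : R := dew_prob K l d e beta A t a.
Definition loss_est A x a : R := l x a * (if a =? A x then 1 else 0) / play_prob A x a.
(* The estimate that Skipper forwards to DEW; there is no round 0. *)
Definition fed_est A x a : R :=
  if 1 <=? x then (if Rlt_dec (INR (d x)) beta then loss_est A x a else 0) else 0.
Definition received A n a : R :=
  rsum (S n) (fun x => if x + d x <=? n then fed_est A x a else 0).
Definition arrived_est A n a : R :=
  rsum (S n) (fun x => if x + d x =? n then fed_est A x a else 0).

Lemma dew_W_succ A m s a : dew_W K l d e beta A (S m) s a =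
  if s <=? m then dew_W K l d e beta A m s a
  else dew_W K l d e beta A m m a *
       exp (- e * rsum (S (S m)) (fun s' =>
         if ((1 <=? s') && (s' + d s' =? S m))%bool then
           if Rlt_dec (INR (d s')) beta then
             l s' a * (if a =? A s' then 1 else 0)
             / (dew_W K l d e beta A m (s' - 1) a
                / rsum K (fun b => dew_W K l d e beta A m (s' - 1) b))
           else 0
         else 0)).
Proof. reflexivity. Qed.

Lemma dew_W_frozen A n s a : (s <= n)%nat ->
  dew_W K l d e beta A n s a = dew_W K l d e beta A s s a.
Proof.
  induction n as [|n IH]; intros Hs; [now replace s with O by lia|].
  destruct (Nat.eq_dec s (S n)) as [->|Hsn]; [reflexivity|].
  rewrite dew_W_succ. replace (s <=? n)%nat with true by (symmetry; apply Nat.leb_le; lia).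
  apply IH; lia.
Qed.

Lemma weight_succ A m a :
  weight A (S m) a = weight A m a * exp (- e * arrived_est A (S m) a).
Proof.
  unfold weight at 1. rewrite dew_W_succ.
  replace (S m <=? m)%nat with false by (symmetry; apply Nat.leb_gt; lia).
  do 3 f_equal. apply rsum_ext. intros x Hx.
  assert (Hfr : (fun b => dew_W K l d e beta A m (x - 1) b)
                = (fun b => dew_W K l d e beta A (x - 1) (x - 1) b)).
  { extensionality b. apply dew_W_frozen; lia. }
  rewrite Hfr, (dew_W_frozen A m (x - 1)) by lia.
  unfold fed_est, loss_est, play_prob, dew_prob.
  destruct (1 <=? x)%nat; destruct (x + d x =? S m)%nat; reflexivity.
Qed.

Lemma received_succ A n a : received A (S n) a = received A n a + arrived_est A (S n) a.
Proof.
  unfold received, arrived_est. change (rsum (S (S n)) ?f) with (rsum (S n) f + f (S n)).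
  cbv beta. rewrite <- Rplus_assoc, <- rsum_add. f_equal.
  - apply rsum_ext. intros x Hx.
    destruct (Nat.leb_spec (x + d x) (S n)); destruct (Nat.leb_spec (x + d x) n);
      destruct (Nat.eqb_spec (x + d x) (S n)); try lia; ring.
  - destruct (Nat.leb_spec (S n + d (S n)) (S n)); destruct (Nat.eqb_spec (S n + d (S n)) (S n));
      auto; lia.
Qed.

Lemma weight_closed_form A n a : weight A n a = exp (- e * received A n a).
Proof.
  induction n as [|n IH].
  - unfold received, fed_est; simpl.
    destruct (d 0 <=? 0)%nat; rewrite Rplus_0_l, Rmult_0_r, exp_0; reflexivity.
  - rewrite weight_succ, IH, <- exp_plus, received_succ. f_equal. ring.
Qed.

Lemma weight_pos A n a : 0 < weight A n a.
Proof. rewrite weight_closed_form; apply exp_pos. Qed.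

Lemma total_weight_pos A n : 0 < total_weight A n.
Proof. apply rsum_pos; auto. intros; apply weight_pos. Qed.

Lemma play_prob_eq A t a : play_prob A t a = weight A (t - 1) a / total_weight A (t - 1).
Proof. reflexivity. Qed.

Lemma play_prob_succ A i a : play_prob A (S i) a = weight A i a / total_weight A i.
Proof. rewrite play_prob_eq. now replace (S i - 1)%nat with i by lia. Qed.

Lemma play_prob_pos A t a : 0 < play_prob A t a.
Proof. apply Rdiv_lt_0_compat; [apply weight_pos|apply total_weight_pos]. Qed.

Lemma play_prob_sum A t : rsum K (play_prob A t) = 1.
Proof.
  rewrite (rsum_ext _ _ (fun a => weight A (t - 1) a * / total_weight A (t - 1)))
    by (intros; apply play_prob_eq).
  rewrite rsum_mulr. apply Rinv_r, Rgt_not_eq, total_weight_pos.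
Qed.

Lemma rate_pos : 0 < e.
Proof. rewrite He. pose proof (exp_pos 1). apply Rinv_0_lt_compat. nra. Qed.

Lemma rate_beta : 4 * e * beta = / exp 1.
Proof. rewrite He. pose proof (exp_pos 1). field. lra. Qed.

Lemma loss_est_nonneg A x a : 0 <= loss_est A x a.
Proof.
  apply Rdiv_nonneg; [|apply play_prob_pos].
  apply Rmult_le_pos; [apply Hl|destruct (a =? A x)%nat; lra].
Qed.

Lemma fed_est_nonneg A x a : 0 <= fed_est A x a.
Proof.
  unfold fed_est. destruct (1 <=? x)%nat; [destruct Rlt_dec|]; try lra. apply loss_est_nonneg.
Qed.

Lemma exp_neg_rate_le_1 z : 0 <= z -> exp (- e * z) <= 1.
Proof.
  intros Hz. pose proof rate_pos. rewrite <- exp_0.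
  destruct (Req_dec z 0) as [->|Hz0]; [rewrite Rmult_0_r; lra|].
  apply Rlt_le, exp_increasing. nra.
Qed.

Lemma weight_antitone A m n a : (m <= n)%nat -> weight A n a <= weight A m a.
Proof.
  induction 1 as [|n _ IH]; [lra|]. rewrite weight_succ.
  pose proof (weight_pos A n a).
  assert (exp (- e * arrived_est A (S n) a) <= 1).
  { apply exp_neg_rate_le_1, rsum_nonneg. intros.
    destruct (_ =? _)%nat; [apply fed_est_nonneg|lra]. }
  nra.
Qed.

Lemma total_weight_antitone A m n : (m <= n)%nat -> total_weight A n <= total_weight A m.
Proof. intros H. apply rsum_le. intros; now apply weight_antitone. Qed.

(* Importance weighting against the later distribution [p_n] is bounded by the
   ratio of total weights, because individual weights only decrease. *)
Lemma expected_fed_est_le A n x : (1 <= x <= n)%nat ->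
  rsum K (fun a => play_prob A n a * fed_est A x a)
  <= kept d beta x * (total_weight A (x - 1) / total_weight A (n - 1)).
Proof.
  intros Hx. unfold fed_est, kept.
  replace (1 <=? x)%nat with true by (symmetry; apply Nat.leb_le; lia).
  pose proof (total_weight_pos A (x - 1)). pose proof (total_weight_pos A (n - 1)).
  destruct Rlt_dec; [|rewrite (rsum_ext _ _ (fun _ => 0)), rsum_zero by (intros; ring); lra].
  rewrite Rmult_1_l.
  eapply Rle_trans; [|apply (rsum_indicator_le K (A x)), Rdiv_nonneg; lra].
  apply rsum_le. intros a _. unfold loss_est. rewrite !play_prob_eq.
  set (wn := weight A (n - 1) a). set (wx := weight A (x - 1) a).
  assert (0 < wn) by apply weight_pos. assert (0 < wx) by apply weight_pos.
  assert (Hratio : wn / wx <= 1).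
  { assert (wn <= wx) by (apply weight_antitone; lia).
    apply Rmult_le_reg_r with wx; auto. unfold Rdiv. rewrite Rmult_assoc, Rinv_l; lra. }
  destruct (Hl x a). destruct (a =? A x)%nat.
  - replace (wn / total_weight A (n - 1) * (l x a * 1 / (wx / total_weight A (x - 1))))
      with (l x a * (wn / wx) * (total_weight A (x - 1) / total_weight A (n - 1)))
      by (field; repeat split; lra).
    apply Rmult_le_compat_r; [apply Rdiv_nonneg; lra|].
    assert (0 <= wn / wx) by (apply Rdiv_nonneg; lra). nra.
  - unfold Rdiv. rewrite !Rmult_0_r, !Rmult_0_l, Rmult_0_r. lra.
Qed.

(* The weight lost at round r is paid by the estimates arriving at r; each of them
   is small under p_r as long as the total weight has not dropped too much since it
   was played. *)
Lemma total_weight_drop A r : (1 <= r)%nat ->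
  (forall x, (1 <= x <= r)%nat -> (x + d x)%nat = r -> kept d beta x = 1 ->
     total_weight A (x - 1) <= 2 * total_weight A (r - 1)) ->
  total_weight A (r - 1) - total_weight A r <= 2 * e * total_weight A (r - 1) * arrivals d beta r.
Proof.
  intros Hr Hc. destruct r as [|m]; [lia|]. replace (S m - 1)%nat with m in * by lia.
  pose proof rate_pos. pose proof (total_weight_pos A m).
  assert (Hlin : total_weight A m - total_weight A (S m)
                 <= e * total_weight A m * rsum K (fun a => play_prob A (S m) a * arrived_est A (S m) a)).
  { rewrite Rmult_assoc, <- rsum_mull, <- rsum_mull. unfold total_weight at 1 2.
    rewrite <- rsum_sub. apply rsum_le. intros a _.
    rewrite weight_succ, play_prob_succ.
    pose proof (exp_ineq1_le (- e * arrived_est A (S m) a)). pose proof (weight_pos A m a).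
    replace (e * (total_weight A m * (weight A m a / total_weight A m * arrived_est A (S m) a)))
      with (weight A m a * (e * arrived_est A (S m) a)) by (field; lra).
    nra. }
  assert (Harr : rsum K (fun a => play_prob A (S m) a * arrived_est A (S m) a) <= 2 * arrivals d beta (S m)).
  { unfold arrived_est, arrivals.
    rewrite (rsum_ext K _ (fun a => rsum (S (S m)) (fun x =>
               if x + d x =? S m then play_prob A (S m) a * fed_est A x a else 0))).
    2: { intros a _. rewrite <- rsum_mull. apply rsum_ext. intros x _. destruct (_ =? _)%nat; ring. }
    rewrite rsum_swap, <- rsum_mull. apply rsum_le. intros x Hx.
    destruct (Nat.eqb_spec (x + d x) (S m)) as [Harrive|]; [|rewrite rsum_zero; lra].
    unfold counted. destruct (Nat.leb_spec 1 x).
    - eapply Rle_trans; [apply expected_fed_est_le; lia|]. replace (S m - 1)%nat with m by lia.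
      destruct (kept_cases d beta x) as [E|E]; rewrite E; [lra|].
      specialize (Hc x ltac:(lia) Harrive E). replace (S m - 1)%nat with m in Hc by lia.
      apply Rmult_le_reg_r with (total_weight A m); auto.
      unfold Rdiv. rewrite Rmult_assoc, Rmult_assoc, Rinv_l; lra.
    - replace x with O by lia. unfold fed_est. simpl.
      rewrite (rsum_ext _ _ (fun _ => 0)), rsum_zero by (intros; ring). lra. }
  assert (e * total_weight A m * rsum K (fun a => play_prob A (S m) a * arrived_est A (S m) a)
          <= e * total_weight A m * (2 * arrivals d beta (S m))) by (apply Rmult_le_compat_l; nra).
  lra.
Qed.

Lemma total_weight_telescope A m n : (m <= n)%nat ->
  (forall r, (m < r <= n)%nat ->
     total_weight A (r - 1) - total_weight A r <= 2 * e * total_weight A (r - 1) * arrivals d beta r) ->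
  total_weight A m - total_weight A n <= 2 * e * total_weight A m * arrivals_in d beta m n.
Proof.
  induction 1 as [|n Hmn IH]; intros Hstep; [rewrite arrivals_in_empty; lra|].
  specialize (IH (fun r Hr => Hstep r ltac:(lia))).
  specialize (Hstep (S n) ltac:(lia)). replace (S n - 1)%nat with n in Hstep by lia.
  rewrite arrivals_in_succ by auto.
  pose proof rate_pos. pose proof (arrivals_nonneg d beta (S n)).
  assert (total_weight A n <= total_weight A m) by (now apply total_weight_antitone).
  assert (2 * e * total_weight A n * arrivals d beta (S n) <= 2 * e * total_weight A m * arrivals d beta (S n))
    by (apply Rmult_le_compat_r; [auto|]; apply Rmult_le_compat_l; lra).
  lra.
Qed.

(* Since 4 e beta = 1 / exp 1 < 1 / 2, fewer than beta rounds cannot halve the total weight. *)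
Lemma total_weight_halving A n m : (m <= n)%nat -> INR (n - m) < beta ->
  total_weight A m <= 2 * total_weight A n.
Proof.
  revert m. induction n as [n IH] using (well_founded_induction lt_wf). intros m Hmn Hnm.
  assert (Htele : total_weight A m - total_weight A n
                  <= 2 * e * total_weight A m * arrivals_in d beta m n).
  { apply total_weight_telescope; [auto|]. intros r Hr.
    apply total_weight_drop; [lia|]. intros x Hx Hxd Hkept. apply IH; [lia|lia|].
    replace (r - 1 - (x - 1))%nat with (d x) by lia.
    unfold kept in Hkept. destruct Rlt_dec; [auto|lra]. }
  pose proof (arrivals_in_le d beta Hb m n Hmn). pose proof (total_weight_pos A m).
  pose proof rate_pos. pose proof rate_beta. pose proof exp_1_ge_5_2.
  assert (Hsmall : 2 * e * arrivals_in d beta m n <= 1 / 2).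
  { assert (/ exp 1 <= 1 / 2) by (apply Rmult_le_reg_l with (exp 1); [lra|]; rewrite Rinv_r; lra).
    nra. }
  nra.
Qed.

(* The estimates re-indexed from 0, as seen by a virtual, undelayed exponential-weights
   run on the same estimates. *)
Definition est A j a : R := fed_est A (S j) a.
Definition virtual_prob A i a : R := hedge_prob K e (est A) i a.
Definition outstanding_est A s a : R :=
  rsum s (fun x => if s <=? x + d x then fed_est A x a else 0).

Lemma outstanding_est_nonneg A s a : 0 <= outstanding_est A s a.
Proof. apply rsum_nonneg. intros. destruct (_ <=? _)%nat; [apply fed_est_nonneg|lra]. Qed.

Lemma hedge_weight_est A i a :
  hedge_weight e (est A) i a = weight A i a * exp (- e * outstanding_est A (S i) a).
Proof.
  unfold hedge_weight. rewrite weight_closed_form, <- exp_plus. f_equal.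
  replace (rsum i (fun x => est A x a)) with (rsum (S i) (fun x => fed_est A x a))
    by (rewrite rsum_first; change (fed_est A 0 a) with 0; unfold est; ring).
  unfold received, outstanding_est. rewrite <- Rmult_plus_distr_l, <- rsum_add. f_equal.
  apply rsum_ext. intros x Hx.
  destruct (Nat.leb_spec (x + d x) i); destruct (Nat.leb_spec (S i) (x + d x)); try lia; ring.
Qed.

Lemma hedge_total_est A i : rsum K (hedge_weight e (est A) i) =
  total_weight A i * rsum K (fun b => play_prob A (S i) b * exp (- e * outstanding_est A (S i) b)).
Proof.
  rewrite <- rsum_mull. apply rsum_ext. intros b _.
  rewrite hedge_weight_est, play_prob_succ. pose proof (total_weight_pos A i). field. lra.
Qed.

Lemma hedge_total_le A i : rsum K (hedge_weight e (est A) i) <= total_weight A i.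
Proof.
  apply rsum_le. intros b _. rewrite hedge_weight_est. pose proof (weight_pos A i b).
  pose proof (exp_neg_rate_le_1 _ (outstanding_est_nonneg A (S i) b)). nra.
Qed.

Lemma discounted_play_prob_le A i a :
  play_prob A (S i) a * exp (- e * outstanding_est A (S i) a) <= virtual_prob A i a.
Proof.
  unfold virtual_prob, hedge_prob. rewrite hedge_weight_est, play_prob_succ.
  pose proof (total_weight_pos A i). pose proof (hedge_total_pos K e (est A) HK i).
  pose proof (hedge_total_le A i).
  pose proof (weight_pos A i a). pose proof (exp_pos (- e * outstanding_est A (S i) a)).
  unfold Rdiv. rewrite Rmult_assoc, (Rmult_comm (/ _)), <- Rmult_assoc.
  apply Rmult_le_compat_l; [nra|]. now apply Rinv_le_contravar.
Qed.

Lemma play_loss_le_virtual A i :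
  rsum K (fun a => play_prob A (S i) a * l (S i) a) <=
  rsum K (fun a => virtual_prob A i a * l (S i) a)
  + e * rsum K (fun a => play_prob A (S i) a * outstanding_est A (S i) a).
Proof.
  rewrite <- rsum_mull, <- rsum_add. apply rsum_le. intros a _.
  pose proof rate_pos. pose proof (discounted_play_prob_le A i a).
  pose proof (exp_ineq1_le (- e * outstanding_est A (S i) a)).
  pose proof (play_prob_pos A (S i) a). pose proof (outstanding_est_nonneg A (S i) a).
  assert (Hgap : play_prob A (S i) a - virtual_prob A i a
                 <= e * (play_prob A (S i) a * outstanding_est A (S i) a)) by nra.
  destruct (Hl (S i) a).
  destruct (Rle_dec (play_prob A (S i) a) (virtual_prob A i a)); [|nra].
  assert (0 <= e * (play_prob A (S i) a * outstanding_est A (S i) a))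
    by (apply Rmult_le_pos; nra).
  nra.
Qed.

Lemma virtual_prob_ratio A i a :
  virtual_prob A i a * (1 - e * rsum K (fun b => play_prob A (S i) b * outstanding_est A (S i) b))
  <= play_prob A (S i) a.
Proof.
  pose proof rate_pos. pose proof (hedge_total_pos K e (est A) HK i). pose proof (total_weight_pos A i).
  assert (Hmass : 1 - e * rsum K (fun b => play_prob A (S i) b * outstanding_est A (S i) b)
                  <= rsum K (hedge_weight e (est A) i) / total_weight A i).
  { rewrite hedge_total_est.
    replace (total_weight A i * rsum K (fun b => play_prob A (S i) b * exp (- e * outstanding_est A (S i) b))
             / total_weight A i)
      with (rsum K (fun b => play_prob A (S i) b * exp (- e * outstanding_est A (S i) b)))
      by (field; lra).
    rewrite <- (play_prob_sum A (S i)), <- rsum_mull, <- rsum_sub. apply rsum_le. intros b _.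
    pose proof (exp_ineq1_le (- e * outstanding_est A (S i) b)). pose proof (play_prob_pos A (S i) b).
    nra. }
  pose proof (hedge_prob_nonneg K e (est A) HK i a).
  apply Rle_trans with (virtual_prob A i a * (rsum K (hedge_weight e (est A) i) / total_weight A i));
    [now apply Rmult_le_compat_l|].
  unfold virtual_prob, hedge_prob. rewrite hedge_weight_est, play_prob_succ.
  pose proof (weight_pos A i a). pose proof (exp_neg_rate_le_1 _ (outstanding_est_nonneg A (S i) a)).
  replace (weight A i a * exp (- e * outstanding_est A (S i) a) / rsum K (hedge_weight e (est A) i)
           * (rsum K (hedge_weight e (est A) i) / total_weight A i))
    with (weight A i a * exp (- e * outstanding_est A (S i) a) / total_weight A i) by (field; lra).
  unfold Rdiv. apply Rmult_le_compat_r; [apply Rlt_le, Rinv_0_lt_compat; auto|]. nra.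
Qed.

(* Each outstanding estimate was played fewer than beta rounds ago, so by
   [total_weight_halving] it weighs at most 2 under p_s. *)
Lemma expected_outstanding_est_le A s : (1 <= s)%nat ->
  rsum K (fun b => play_prob A s b * outstanding_est A s b) <= 2 * beta.
Proof.
  intros Hs. unfold outstanding_est.
  rewrite (rsum_ext K _ (fun b => rsum s (fun x =>
             if s <=? x + d x then play_prob A s b * fed_est A x b else 0))).
  2: { intros b _. rewrite <- rsum_mull. apply rsum_ext. intros x _. destruct (_ <=? _)%nat; ring. }
  rewrite rsum_swap.
  apply Rle_trans with (rsum s (fun x => 2 * (if Rlt_dec (INR s - beta) (INR x) then 1 else 0))).
  - apply rsum_le. intros x Hx. destruct (Nat.leb_spec s (x + d x)).
    2: { rewrite rsum_zero. destruct Rlt_dec; lra. }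
    destruct (Nat.leb_spec 1 x).
    + eapply Rle_trans; [apply expected_fed_est_le; lia|]. unfold kept.
      pose proof (total_weight_pos A (x - 1)). pose proof (total_weight_pos A (s - 1)).
      destruct (Rlt_dec (INR (d x)) beta) as [Hd|Hd]; [|destruct Rlt_dec; lra].
      assert (total_weight A (x - 1) <= 2 * total_weight A (s - 1)).
      { apply total_weight_halving; [lia|]. eapply Rle_lt_trans; [|exact Hd]. apply le_INR; lia. }
      destruct Rlt_dec as [Hq|Hq].
      * apply Rmult_le_reg_r with (total_weight A (s - 1)); auto.
        unfold Rdiv. rewrite Rmult_1_l, Rmult_assoc, Rinv_l; lra.
      * exfalso. apply Hq. assert (Hs2 : INR s <= INR (x + d x)) by (apply le_INR; lia).
        rewrite plus_INR in Hs2. lra.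
    + replace x with O by lia. unfold fed_est. simpl.
      rewrite (rsum_ext _ _ (fun _ => 0)), rsum_zero by (intros; ring). destruct Rlt_dec; lra.
  - rewrite rsum_mull. destruct s as [|s]; [lia|]. pose proof (count_above_le s (INR (S s) - beta)).
    rewrite S_INR in *. unfold Rmax in *. destruct Rle_dec; lra.
Qed.

Lemma virtual_prob_le A i b : virtual_prob A i b <= exp 1 / 2 * play_prob A (S i) b.
Proof.
  pose proof (virtual_prob_ratio A i b). pose proof (expected_outstanding_est_le A (S i) ltac:(lia)).
  pose proof rate_pos. pose proof rate_beta. pose proof exp_1_ge_5_2.
  pose proof (hedge_prob_nonneg K e (est A) HK i b). fold (virtual_prob A i b) in *.
  set (S0 := rsum K (fun b0 => play_prob A (S i) b0 * outstanding_est A (S i) b0)) in *.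
  assert (HeS : e * S0 <= / (2 * exp 1)).
  { apply Rle_trans with (e * (2 * beta)); [apply Rmult_le_compat_l; lra|].
    rewrite Rinv_mult. lra. }
  assert (/ (2 * exp 1) <= 1 / 5).
  { apply Rmult_le_reg_l with (2 * exp 1); [lra|]. rewrite Rinv_r; lra. }
  assert (1 <= exp 1 / 2 * (1 - e * S0)) by nra.
  nra.
Qed.

(** * Expectation over action sequences *)

Lemma dew_W_depends n A A' : (forall s, (1 <= s)%nat -> (s + d s <= n)%nat -> A s = A' s) ->
  dew_W K l d e beta A n = dew_W K l d e beta A' n.
Proof.
  induction n as [|n IH]; intros H; [reflexivity|].
  extensionality s. extensionality a. rewrite !dew_W_succ, IH by (intros; apply H; lia).
  destruct (s <=? n)%nat; [reflexivity|]. do 3 f_equal. apply rsum_ext. intros x Hx.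
  destruct (Nat.leb_spec 1 x); destruct (Nat.eqb_spec (x + d x) (S n)); cbn [andb]; auto.
  now rewrite (H x) by lia.
Qed.

Lemma play_prob_depends t A A' a :
  (forall s, (1 <= s)%nat -> (s + d s <= t - 1)%nat -> A s = A' s) ->
  play_prob A t a = play_prob A' t a.
Proof. intros H. unfold play_prob, dew_prob. now rewrite (dew_W_depends (t - 1) A A' H). Qed.

Lemma play_prob_snoc h a t b : (t <= S (length h))%nat ->
  play_prob (act_of (h ++ [a])) t b = play_prob (act_of h) t b.
Proof. intros Ht. apply play_prob_depends. intros s H1 H2. apply act_of_snoc_lt. lia. Qed.

Definition seq_prob n h : R := rprod n (fun i => play_prob (act_of h) (S i) (act_of h (S i))).
Definition expect n (F : list nat -> R) : R :=
  fold_right (fun h acc => acc + seq_prob n h * F h) 0 (all_seqs n K).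

Lemma expect_lsum n F : expect n F = lsum (all_seqs n K) (fun h => seq_prob n h * F h).
Proof. reflexivity. Qed.

Lemma seq_prob_pos n h : 0 < seq_prob n h.
Proof.
  unfold seq_prob. induction n as [|n IH]; simpl; [lra|].
  apply Rmult_lt_0_compat; auto. apply play_prob_pos.
Qed.

Lemma expect_succ n F : expect (S n) F =
  expect n (fun h => rsum K (fun a => play_prob (act_of h) (S n) a * F (h ++ [a]))).
Proof.
  rewrite !expect_lsum. simpl all_seqs. rewrite lsum_flat_map. apply lsum_ext. intros h Hh.
  pose proof (all_seqs_length n K h Hh) as Hlen.
  rewrite lsum_map, lsum_seq, <- rsum_mull. apply rsum_ext. intros a _.
  unfold seq_prob. simpl rprod. rewrite <- Hlen, act_of_snoc_last, play_prob_snoc by lia.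
  rewrite (rprod_ext (length h) _ (fun i => play_prob (act_of h) (S i) (act_of h (S i)))); [ring|].
  intros i Hi. now rewrite play_prob_snoc, act_of_snoc_lt by lia.
Qed.

Lemma expect_ext n F G : (forall h, length h = n -> F h = G h) -> expect n F = expect n G.
Proof.
  intros H. rewrite !expect_lsum. apply lsum_ext. intros h Hh.
  rewrite H; [reflexivity|]. now apply (all_seqs_length n K).
Qed.

Lemma expect_le n F G : (forall h, length h = n -> F h <= G h) -> expect n F <= expect n G.
Proof.
  intros H. rewrite !expect_lsum. apply lsum_le. intros h Hh.
  apply Rmult_le_compat_l; [apply Rlt_le, seq_prob_pos|]. now apply H, (all_seqs_length n K).
Qed.

Lemma expect_add n F G : expect n (fun h => F h + G h) = expect n F + expect n G.
Proof. rewrite !expect_lsum, <- lsum_add. apply lsum_ext; intros; ring. Qed.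

Lemma expect_mull n c F : expect n (fun h => c * F h) = c * expect n F.
Proof. rewrite !expect_lsum, <- lsum_mull. apply lsum_ext; intros; ring. Qed.

Lemma expect_zero n : expect n (fun _ => 0) = 0.
Proof.
  replace (fun _ : list nat => 0) with (fun _ : list nat => 0 * 0) by (extensionality h; ring).
  rewrite expect_mull. ring.
Qed.

Lemma expect_rsum n m (F : nat -> list nat -> R) :
  expect n (fun h => rsum m (fun i => F i h)) = rsum m (fun i => expect n (F i)).
Proof. induction m as [|m IH]; simpl; [apply expect_zero|]. now rewrite expect_add, IH. Qed.

Lemma expect_const n c : expect n (fun _ => c) = c.
Proof.
  induction n as [|n IH]; [unfold expect, seq_prob; simpl; ring|].
  rewrite expect_succ, <- IH. apply expect_ext. intros h _.
  now rewrite rsum_mulr, play_prob_sum, Rmult_1_l.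
Qed.

Lemma expect_marginal M k F :
  (forall h h', (forall s, (1 <= s <= M)%nat -> act_of h s = act_of h' s) -> F h = F h') ->
  expect (M + k) F = expect M F.
Proof.
  intros HF. induction k as [|k IH]; [now rewrite Nat.add_0_r|].
  replace (M + S k)%nat with (S (M + k)) by lia. rewrite expect_succ, <- IH.
  apply expect_ext. intros h Hh.
  rewrite (rsum_ext _ _ (fun a => play_prob (act_of h) (S (M + k)) a * F h)).
  - now rewrite rsum_mulr, play_prob_sum, Rmult_1_l.
  - intros a _. f_equal. apply HF. intros s Hs. apply act_of_snoc_lt. lia.
Qed.

Lemma expect_resample_last n (f : nat -> list nat -> R) :
  (forall b h h', length h = S n -> length h' = S n ->
     (forall s, (1 <= s)%nat -> s <> S n -> act_of h s = act_of h' s) -> f b h = f b h') ->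
  expect (S n) (fun h => f (act_of h (S n)) h)
  = expect (S n) (fun h => rsum K (fun b => play_prob (act_of h) (S n) b * f b h)).
Proof.
  intros Hf. rewrite !expect_succ. apply expect_ext. intros h Hh.
  assert (Hlast : forall b a, f b (h ++ [a]) = f b (h ++ [O])).
  { intros b a. apply Hf; try (rewrite length_app; simpl; lia).
    intros s H1 H2. destruct (Nat.le_gt_cases s (length h)).
    - rewrite !act_of_snoc_lt; auto; lia.
    - rewrite !act_of_overflow; auto; rewrite length_app; simpl; lia. }
  rewrite (rsum_ext _ _ (fun a => play_prob (act_of h) (S n) a * f a (h ++ [O])))
    by (intros a _; now rewrite <- Hh, act_of_snoc_last, Hlast).
  rewrite (rsum_ext _ (fun a => play_prob (act_of h) (S n) a
             * rsum K (fun b => play_prob (act_of (h ++ [a])) (S n) b * f b (h ++ [a])))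
           (fun a => play_prob (act_of h) (S n) a
             * rsum K (fun b => play_prob (act_of h) (S n) b * f b (h ++ [O])))).
  - now rewrite rsum_mulr, play_prob_sum, Rmult_1_l.
  - intros a _. f_equal. apply rsum_ext. intros b _. now rewrite play_prob_snoc, Hlast by lia.
Qed.

Lemma expect_resample_prefix x k : (1 <= x)%nat -> forall (f : nat -> list nat -> R),
  (forall b h h', length h = (x + k)%nat -> length h' = (x + k)%nat ->
     (forall s, (1 <= s)%nat -> s <> x -> act_of h s = act_of h' s) -> f b h = f b h') ->
  (forall t a A A', (t <= x + k)%nat -> (forall s, (1 <= s)%nat -> s <> x -> A s = A' s) ->
     play_prob A t a = play_prob A' t a) ->
  expect (x + k) (fun h => f (act_of h x) h)
  = expect (x + k) (fun h => rsum K (fun b => play_prob (act_of h) x b * f b h)).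
Proof.
  intros Hx. induction k as [|k IH]; intros f Hf Hp.
  { rewrite Nat.add_0_r in *. destruct x as [|n]; [lia|]. now apply expect_resample_last. }
  replace (x + S k)%nat with (S (x + k)) by lia. set (M := (x + k)%nat).
  (* Sum out the last action first; what remains depends on A_x only through b. *)
  set (g := fun b h => rsum K (fun a => play_prob (act_of h) (S M) a * f b (h ++ [a]))).
  rewrite !expect_succ.
  transitivity (expect M (fun h => g (act_of h x) h)).
  { apply expect_ext. intros h Hh. unfold g. apply rsum_ext. intros a _.
    now rewrite act_of_snoc_lt by lia. }
  rewrite IH.
  - apply expect_ext. intros h Hh. unfold g.
    rewrite (rsum_ext _ (fun a => play_prob (act_of h) (S M) a
               * rsum K (fun b => play_prob (act_of (h ++ [a])) x b * f b (h ++ [a])))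
             (fun a => rsum K (fun b => play_prob (act_of h) x b
               * (play_prob (act_of h) (S M) a * f b (h ++ [a]))))).
    + rewrite rsum_swap. apply rsum_ext. intros b _. now rewrite <- rsum_mull.
    + intros a _. rewrite <- rsum_mull. apply rsum_ext. intros b _.
      rewrite play_prob_snoc by lia. ring.
  - intros b h h' Hh Hh' Hag. unfold g. apply rsum_ext. intros a _.
    rewrite (Hp (S M) a (act_of h) (act_of h')) by (auto; lia).
    f_equal. apply Hf; try (rewrite length_app; simpl; lia).
    apply act_of_snoc_agree; auto; lia.
  - intros t a A A' Ht Hag. apply Hp; auto; lia.
Qed.

(* If the outcome depends on A_x only through its first argument, and no play
   probability up to round M reacts to A_x, then A_x may be replaced by a fresh draw
   from p_x: E[G(A_x, A)] = E[sum_b p_x(b) G(b, A)]. *)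
Lemma expect_resample T x M (G : nat -> (nat -> nat) -> R) :
  (1 <= x)%nat -> (x <= M)%nat -> (M <= T)%nat ->
  (forall b A A', (forall s, (1 <= s <= M)%nat -> s <> x -> A s = A' s) -> G b A = G b A') ->
  (forall t a A A', (t <= M)%nat -> (forall s, (1 <= s)%nat -> s <> x -> A s = A' s) ->
     play_prob A t a = play_prob A' t a) ->
  expect T (fun h => G (act_of h x) (act_of h))
  = expect T (fun h => rsum K (fun b => play_prob (act_of h) x b * G b (act_of h))).
Proof.
  intros H1 H2 H3 HG Hp. replace T with (M + (T - M))%nat by lia.
  rewrite !expect_marginal.
  - replace M with (x + (M - x))%nat by lia.
    apply (expect_resample_prefix x (M - x) H1 (fun b h => G b (act_of h))).
    + intros b h h' _ _ Hag. apply HG. intros; apply Hag; lia.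
    + intros. apply Hp; auto; lia.
  - intros h h' Hag. apply rsum_ext. intros b _.
    rewrite (HG b (act_of h) (act_of h')) by (intros; apply Hag; lia).
    f_equal. apply play_prob_depends. intros s Hs1 Hs2. apply Hag. lia.
  - intros h h' Hag. rewrite (Hag x) by lia. apply HG. intros; apply Hag; lia.
Qed.

Lemma loss_est_depends x a A A' : A x = A' x ->
  (forall s, (1 <= s)%nat -> (s + d s <= x - 1)%nat -> A s = A' s) ->
  loss_est A x a = loss_est A' x a.
Proof. intros H1 H2. unfold loss_est. now rewrite H1, (play_prob_depends x A A' a H2). Qed.

Lemma virtual_prob_depends i a A A' : (forall s, (1 <= s <= i)%nat -> A s = A' s) ->
  virtual_prob A i a = virtual_prob A' i a.
Proof.
  intros H. assert (Hw : forall b, hedge_weight e (est A) i b = hedge_weight e (est A') i b).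
  { intros b. unfold hedge_weight. do 2 f_equal. apply rsum_ext. intros x Hx.
    unfold est, fed_est. rewrite (loss_est_depends (S x) b A A'); auto.
    - apply H; lia.
    - intros s Hs1 Hs2. apply H; lia. }
  unfold virtual_prob, hedge_prob. rewrite Hw. f_equal. now apply rsum_ext.
Qed.

Lemma play_prob_ignores_late i t A A' a x : (t <= S i)%nat -> (S i <= x + d x)%nat ->
  (forall s, (1 <= s)%nat -> s <> x -> A s = A' s) -> play_prob A t a = play_prob A' t a.
Proof. intros H1 H2 H. apply play_prob_depends. intros s Hs1 Hs2. apply H; [lia|intros ->; lia]. Qed.

Lemma est_eq_kept A i a : est A i a = kept d beta (S i) * loss_est A (S i) a.
Proof. unfold est, fed_est, kept. simpl (1 <=? S i)%nat. destruct Rlt_dec; ring. Qed.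

Variable T : nat.

Lemma expected_loss_eq i : (i < T)%nat ->
  expect T (fun h => l (S i) (act_of h (S i)))
  = expect T (fun h => rsum K (fun b => play_prob (act_of h) (S i) b * l (S i) b)).
Proof.
  intros Hi. apply (expect_resample T (S i) (S i) (fun b A => l (S i) b)); try lia; auto.
  intros t a A A' Ht Hag. apply (play_prob_ignores_late i t A A' a (S i)); auto; lia.
Qed.

Lemma expected_est_unbiased i astar : (i < T)%nat -> (astar < K)%nat ->
  expect T (fun h => loss_est (act_of h) (S i) astar) = l (S i) astar.
Proof.
  intros Hi Ha.
  set (G := fun b A => l (S i) astar * (if astar =? b then 1 else 0) / play_prob A (S i) astar).
  change (expect T (fun h => G (act_of h (S i)) (act_of h)) = l (S i) astar).
  rewrite (expect_resample T (S i) (S i) G); try lia.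
  - rewrite <- (expect_const T (l (S i) astar)). apply expect_ext. intros h _. unfold G.
    rewrite (rsum_ext _ _ (fun b => play_prob (act_of h) (S i) b
               * (l (S i) astar * (if b =? astar then 1 else 0) / play_prob (act_of h) (S i) astar)))
      by (intros b _; now rewrite Nat.eqb_sym).
    rewrite (rsum_delta K astar (fun a c => play_prob (act_of h) (S i) a
               * (l (S i) astar * c / play_prob (act_of h) (S i) astar)))
      by (auto; intros; unfold Rdiv; ring).
    pose proof (play_prob_pos (act_of h) (S i) astar). field. lra.
  - intros b A A' Hag. unfold G. f_equal. apply play_prob_depends.
    intros s H1 H2. apply Hag; [lia|intros ->; lia].
  - intros t a A A' Ht Hag. apply (play_prob_ignores_late i t A A' a (S i)); auto; lia.
Qed.

Lemma expected_virtual_est i : (i < T)%nat ->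
  expect T (fun h => rsum K (fun a => virtual_prob (act_of h) i a * loss_est (act_of h) (S i) a))
  = expect T (fun h => rsum K (fun a => virtual_prob (act_of h) i a * l (S i) a)).
Proof.
  intros Hi.
  set (G := fun b A => rsum K (fun a => virtual_prob A i a
              * (l (S i) a * (if a =? b then 1 else 0) / play_prob A (S i) a))).
  change (expect T (fun h => G (act_of h (S i)) (act_of h))
          = expect T (fun h => rsum K (fun a => virtual_prob (act_of h) i a * l (S i) a))).
  rewrite (expect_resample T (S i) (S i) G); try lia.
  - apply expect_ext. intros h _. apply rsum_ext. intros b Hb0. unfold G.
    rewrite (rsum_delta K b (fun a c => virtual_prob (act_of h) i a
               * (l (S i) a * c / play_prob (act_of h) (S i) a)))
      by (auto; intros; unfold Rdiv; ring).
    pose proof (play_prob_pos (act_of h) (S i) b). field. lra.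
  - intros b A A' Hag. unfold G. apply rsum_ext. intros a _. f_equal.
    + apply virtual_prob_depends. intros s Hs. apply Hag; lia.
    + f_equal. apply play_prob_depends. intros s H1 H2. apply Hag; [lia|intros ->; lia].
  - intros t a A A' Ht Hag. apply (play_prob_ignores_late i t A A' a (S i)); auto; lia.
Qed.

Lemma expected_virtual_square i : (i < T)%nat ->
  expect T (fun h => rsum K (fun a => virtual_prob (act_of h) i a * loss_est (act_of h) (S i) a ^ 2))
  = expect T (fun h => rsum K (fun b =>
      virtual_prob (act_of h) i b * l (S i) b ^ 2 / play_prob (act_of h) (S i) b)).
Proof.
  intros Hi.
  set (G := fun b A => rsum K (fun a => virtual_prob A i a
              * (l (S i) a * (if a =? b then 1 else 0) / play_prob A (S i) a) ^ 2)).
  change (expect T (fun h => G (act_of h (S i)) (act_of h))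
          = expect T (fun h => rsum K (fun b =>
              virtual_prob (act_of h) i b * l (S i) b ^ 2 / play_prob (act_of h) (S i) b))).
  rewrite (expect_resample T (S i) (S i) G); try lia.
  - apply expect_ext. intros h _. apply rsum_ext. intros b Hb0. unfold G.
    rewrite (rsum_delta K b (fun a c => virtual_prob (act_of h) i a
               * (l (S i) a * c / play_prob (act_of h) (S i) a) ^ 2))
      by (auto; intros; unfold Rdiv; ring).
    pose proof (play_prob_pos (act_of h) (S i) b). field. lra.
  - intros b A A' Hag. unfold G. apply rsum_ext. intros a _. f_equal.
    + apply virtual_prob_depends. intros s Hs. apply Hag; lia.
    + do 2 f_equal. apply play_prob_depends. intros s H1 H2. apply Hag; [lia|intros ->; lia].
  - intros t a A A' Ht Hag. apply (play_prob_ignores_late i t A A' a (S i)); auto; lia.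
Qed.

(* A round x still outstanding at round S i has not influenced p_{S i}, so its
   estimate is unbiased under p_{S i} as well. *)
Lemma expected_late_est_le i x : (i < T)%nat -> (1 <= x)%nat -> (x < S i)%nat ->
  (S i <= x + d x)%nat ->
  expect T (fun h => rsum K (fun a => play_prob (act_of h) (S i) a * loss_est (act_of h) x a)) <= 1.
Proof.
  intros Hi Hx1 Hx2 Hx3.
  set (G := fun b A => rsum K (fun a => play_prob A (S i) a
              * (l x a * (if a =? b then 1 else 0) / play_prob A x a))).
  change (expect T (fun h => G (act_of h x) (act_of h)) <= 1).
  rewrite (expect_resample T x (S i) G); try lia.
  - apply Rle_trans with (expect T (fun _ => 1)); [|rewrite expect_const; lra].
    apply expect_le. intros h _.
    rewrite <- (play_prob_sum (act_of h) (S i)). apply rsum_le. intros b Hb0. unfold G.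
    rewrite (rsum_delta K b (fun a c => play_prob (act_of h) (S i) a
               * (l x a * c / play_prob (act_of h) x a)))
      by (auto; intros; unfold Rdiv; ring).
    pose proof (play_prob_pos (act_of h) x b). pose proof (play_prob_pos (act_of h) (S i) b).
    destruct (Hl x b).
    replace (play_prob (act_of h) x b * (play_prob (act_of h) (S i) b
               * (l x b * 1 / play_prob (act_of h) x b)))
      with (play_prob (act_of h) (S i) b * l x b) by (field; lra).
    nra.
  - intros b A A' Hag. unfold G. apply rsum_ext. intros a _. f_equal.
    + apply play_prob_depends. intros s H1 H2. apply Hag; [lia|intros ->; lia].
    + f_equal. apply play_prob_depends. intros s H1 H2. apply Hag; [lia|intros ->; lia].
  - intros t a A A' Ht Hag. apply (play_prob_ignores_late i t A A' a x); auto.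
Qed.

Lemma expected_outstanding_est_le_count i : (i < T)%nat ->
  expect T (fun h => rsum K (fun a => play_prob (act_of h) (S i) a * outstanding_est (act_of h) (S i) a))
  <= outstanding d beta (S i).
Proof.
  intros Hi. unfold outstanding_est, outstanding.
  rewrite (expect_ext T _ (fun h => rsum (S i) (fun x => if S i <=? x + d x
             then rsum K (fun a => play_prob (act_of h) (S i) a * fed_est (act_of h) x a) else 0))).
  2: { intros h _. rewrite (rsum_ext K _ (fun a => rsum (S i) (fun x => if S i <=? x + d x
                              then play_prob (act_of h) (S i) a * fed_est (act_of h) x a else 0))).
       - rewrite rsum_swap. apply rsum_ext. intros x _. destruct (_ <=? _)%nat; auto. apply rsum_zero.
       - intros a _. rewrite <- rsum_mull. apply rsum_ext. intros x _. destruct (_ <=? _)%nat; ring. }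
  rewrite expect_rsum. apply rsum_le. intros x Hx.
  destruct (Nat.leb_spec (S i) (x + d x)); [|rewrite expect_zero; lra].
  unfold counted, kept, fed_est.
  destruct (Nat.leb_spec 1 x); [destruct (Rlt_dec (INR (d x)) beta)|].
  - apply expected_late_est_le; auto.
  - rewrite (expect_ext T _ (fun _ => 0)), expect_zero; [lra|]. intros h _.
    rewrite (rsum_ext _ _ (fun _ => 0)), rsum_zero; auto. intros; ring.
  - rewrite (expect_ext T _ (fun _ => 0)), expect_zero; [lra|]. intros h _.
    rewrite (rsum_ext _ _ (fun _ => 0)), rsum_zero; auto. intros; ring.
Qed.

Lemma expected_virtual_loss_le i : (i < T)%nat ->
  expect T (fun h => rsum K (fun a => virtual_prob (act_of h) i a * l (S i) a))
  <= (1 - kept d beta (S i)) + expect T (fun h => rsum K (fun a => virtual_prob (act_of h) i a * est (act_of h) i a)).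
Proof.
  intros Hi. destruct (kept_cases d beta (S i)) as [E|E].
  - rewrite (expect_ext T (fun h => rsum K (fun a => virtual_prob (act_of h) i a * est (act_of h) i a))
               (fun _ => 0)).
    + rewrite expect_zero, E, <- (expect_const T (1 - 0 + 0)). apply expect_le. intros h _.
      replace (1 - 0 + 0) with 1 by ring.
      rewrite <- (hedge_prob_sum K e (est (act_of h)) HK i). apply rsum_le. intros a _.
      pose proof (hedge_prob_nonneg K e (est (act_of h)) HK i a). destruct (Hl (S i) a).
      unfold virtual_prob. nra.
    + intros h _. rewrite (rsum_ext _ _ (fun _ => 0)), rsum_zero; auto.
      intros a _. rewrite est_eq_kept, E. ring.
  - rewrite E, (expect_ext T (fun h => rsum K (fun a => virtual_prob (act_of h) i a * est (act_of h) i a))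
                  (fun h => rsum K (fun a => virtual_prob (act_of h) i a * loss_est (act_of h) (S i) a))).
    + rewrite expected_virtual_est by auto. lra.
    + intros h _. apply rsum_ext. intros a _. rewrite est_eq_kept, E. ring.
Qed.

Lemma expected_est_le_loss i astar : (i < T)%nat -> (astar < K)%nat ->
  expect T (fun h => est (act_of h) i astar) <= l (S i) astar.
Proof.
  intros Hi Ha.
  rewrite (expect_ext T _ (fun h => kept d beta (S i) * loss_est (act_of h) (S i) astar))
    by (intros; apply est_eq_kept).
  rewrite expect_mull, expected_est_unbiased by auto.
  destruct (kept_cases d beta (S i)) as [E|E]; rewrite E; destruct (Hl (S i) astar); lra.
Qed.

Lemma expected_virtual_variance_le i : (i < T)%nat ->
  expect T (fun h => rsum K (fun a => virtual_prob (act_of h) i a * est (act_of h) i a ^ 2))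
  <= exp 1 / 2 * INR K.
Proof.
  intros Hi.
  rewrite (expect_ext T _ (fun h => kept d beta (S i)
             * rsum K (fun a => virtual_prob (act_of h) i a * loss_est (act_of h) (S i) a ^ 2))).
  2: { intros h _. rewrite <- rsum_mull. apply rsum_ext. intros a _. rewrite est_eq_kept.
       destruct (kept_cases d beta (S i)) as [E|E]; rewrite E; ring. }
  rewrite expect_mull, expected_virtual_square by auto.
  set (V := expect T (fun h => rsum K (fun b =>
              virtual_prob (act_of h) i b * l (S i) b ^ 2 / play_prob (act_of h) (S i) b))).
  assert (HV : V <= exp 1 / 2 * INR K).
  { rewrite <- (expect_const T (exp 1 / 2 * INR K)). apply expect_le. intros h _.
    rewrite Rmult_comm, <- rsum_const. apply rsum_le. intros b _.
    pose proof (virtual_prob_le (act_of h) i b). pose proof (play_prob_pos (act_of h) (S i) b).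
    pose proof (hedge_prob_nonneg K e (est (act_of h)) HK i b). destruct (Hl (S i) b).
    apply Rmult_le_reg_r with (play_prob (act_of h) (S i) b); auto.
    assert (l (S i) b ^ 2 <= 1) by nra.
    unfold Rdiv in *. rewrite Rmult_assoc, Rinv_l by lra. unfold virtual_prob in *. nra. }
  assert (0 <= V).
  { rewrite <- (expect_zero T). apply expect_le. intros h _. apply rsum_nonneg. intros b _.
    apply Rdiv_nonneg; [|apply play_prob_pos].
    apply Rmult_le_pos; [apply hedge_prob_nonneg; auto|apply pow2_ge_0]. }
  destruct (kept_cases d beta (S i)) as [E|E]; rewrite E; lra.
Qed.

Lemma expected_loss_le astar : (astar < K)%nat ->
  expect T (fun h => rsum T (fun i => l (S i) (act_of h (S i))))
  <= ln (INR K) / e + rsum T (fun i => l (S i) astar) + e * (exp 1 / 2 * INR K) * INR T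
     + rsum T (fun i => (1 - kept d beta (S i)) + e * outstanding d beta (S i)).
Proof.
  intros Ha. pose proof rate_pos. rewrite expect_rsum.
  set (Y := fun i => expect T (fun h => rsum K (fun a => virtual_prob (act_of h) i a * est (act_of h) i a))).
  assert (Hplay : rsum T (fun i => expect T (fun h => l (S i) (act_of h (S i))))
                  <= rsum T (fun i => Y i + ((1 - kept d beta (S i)) + e * outstanding d beta (S i)))).
  { apply rsum_le. intros i Hi. rewrite expected_loss_eq by auto.
    eapply Rle_trans; [apply expect_le; intros h _; apply play_loss_le_virtual|].
    rewrite expect_add, expect_mull.
    pose proof (expected_virtual_loss_le i Hi). pose proof (expected_outstanding_est_le_count i Hi).
    unfold Y. nra. }
  assert (Hvirtual : rsum T Y <= ln (INR K) / e + rsum T (fun i => l (S i) astar)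
                                 + e * (exp 1 / 2 * INR K) * INR T).
  { unfold Y. rewrite <- expect_rsum.
    eapply Rle_trans.
    { apply expect_le. intros h _.
      exact (hedge_regret K e (est (act_of h)) HK rate_pos (fun s a => fed_est_nonneg _ _ _) T astar Ha). }
    rewrite !expect_add, expect_const, expect_mull, !expect_rsum.
    assert (rsum T (fun i => expect T (fun h => est (act_of h) i astar)) <= rsum T (fun i => l (S i) astar))
      by (apply rsum_le; intros; apply expected_est_le_loss; auto).
    assert (Hvar : rsum T (fun i => expect T (fun h => rsum K (fun a =>
                     hedge_prob K e (est (act_of h)) i a * est (act_of h) i a ^ 2)))
                   <= rsum T (fun _ => exp 1 / 2 * INR K))
      by (apply rsum_le; intros; apply expected_virtual_variance_le; auto).
    rewrite rsum_const in Hvar. apply (Rmult_le_compat_l e) in Hvar; lra. }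
  rewrite rsum_add in Hplay. lra.
Qed.

End Skipper_DEW.

(** * Regret bound and tuning *)

Theorem skipper_dew_regret_le K T l d beta :
  (1 <= K)%nat -> (forall t a, 0 <= l t a <= 1) -> 0 < beta ->
  let eta := / (4 * exp 1 * beta) in
  regret_skipper_dew K T l d eta beta beta
  <= ln (INR K) / eta + eta * (exp 1 * INR K * INR T / 2) + (eta + / beta) * total_delay T d.
Proof.
  intros HK Hl Hbeta eta.
  destruct (best_loss_attained K T l HK) as [astar [Ha Hbest]].
  unfold regret_skipper_dew. rewrite Hbest.
  change (expected_loss K T l d eta beta beta) with
    (expect K l d (dew_rate eta beta) beta T (fun h => rsum T (fun i => l (S i) (act_of h (S i))))).
  replace (dew_rate eta beta) with eta by (symmetry; apply Rmin_left; right; reflexivity).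
  pose proof (expected_loss_le K l d eta beta HK Hl Hbeta eq_refl T astar Ha) as Hloss.
  pose proof (delay_cost_le d beta Hbeta T eta (Rlt_le _ _ (rate_pos eta beta Hbeta eq_refl))).
  replace (eta * (exp 1 / 2 * INR K) * INR T) with (eta * (exp 1 * INR K * INR T / 2)) in Hloss
    by field.
  unfold cum_loss. lra.
Qed.

Lemma tuned_radicand_pos c L A D : 0 < c -> 0 < L -> 0 <= D -> 0 < A + D ->
  0 < ((A + D) / (4 * c) + D) / (4 * c * L).
Proof.
  intros Hc HL HD HAD. apply Rdiv_lt_0_compat; [|nra].
  assert (0 < (A + D) / (4 * c)) by (apply Rdiv_lt_0_compat; lra). lra.
Qed.

(* With this beta the three terms L / eta, eta A and (eta + 1 / beta) D balance:
   4 c beta L is both the first term and the sum of the other two. *)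
Lemma tuned_bound_eq c L A D beta eta : 0 < c -> 0 < L -> 0 <= D -> 0 < A + D ->
  beta = sqrt (((A + D) / (4 * c) + D) / (4 * c * L)) -> eta = / (4 * c * beta) ->
  L / eta + eta * A + (eta + / beta) * D = 2 * sqrt ((A + (1 + 4 * c) * D) * L).
Proof.
  intros Hc HL HD HAD Hbeta_def Heta_def.
  pose proof (tuned_radicand_pos c L A D Hc HL HD HAD).
  assert (Hbeta : 0 < beta) by (rewrite Hbeta_def; now apply sqrt_lt_R0).
  assert (Hsq : A + (1 + 4 * c) * D = 16 * c ^ 2 * L * beta ^ 2).
  { replace (beta ^ 2) with (beta * beta) by ring.
    rewrite Hbeta_def, sqrt_sqrt by lra.
    field. lra. }
  assert (Hroot : sqrt ((A + (1 + 4 * c) * D) * L) = 4 * c * L * beta).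
  { rewrite Hsq.
    replace (16 * c ^ 2 * L * beta ^ 2 * L) with ((4 * c * L * beta) * (4 * c * L * beta)) by ring.
    apply sqrt_square, Rlt_le. repeat apply Rmult_lt_0_compat; lra. }
  rewrite Hroot, Heta_def. field_simplify_eq; [|lra]. nra.
Qed.

Theorem corollary4 (K T : nat) (l : nat -> nat -> R) (d : nat -> nat) :
  (2 <= K)%nat -> (1 <= T)%nat ->
  (forall t a, 0 <= l t a <= 1) ->
  let D := total_delay T d in
  let beta := sqrt (((exp 1 * INR K * INR T / 2 + D) / (4 * exp 1) + D)
                    / (4 * exp 1 * ln (INR K))) in
  let eta := / (4 * exp 1 * beta) in
  regret_skipper_dew K T l d eta beta beta
    <= 2 * sqrt ((INR K * INR T * exp 1 / 2 + (1 + 4 * exp 1) * D) * ln (INR K)).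
Proof.
  intros HK HT Hl D beta eta.
  assert (HD : 0 <= D) by (apply rsum_nonneg; intros; apply pos_INR).
  assert (HlnK : 0 < ln (INR K)) by (rewrite <- ln_1; apply ln_increasing; [lra|apply lt_1_INR; lia]).
  assert (HA : 0 < exp 1 * INR K * INR T / 2).
  { assert (0 < INR K) by (apply lt_0_INR; lia). assert (0 < INR T) by (apply lt_0_INR; lia).
    pose proof (exp_pos 1). unfold Rdiv. repeat apply Rmult_lt_0_compat; lra. }
  assert (Hbeta : 0 < beta) by (apply sqrt_lt_R0, tuned_radicand_pos; auto using exp_pos; lra).
  replace (INR K * INR T * exp 1 / 2) with (exp 1 * INR K * INR T / 2) by field.
  rewrite <- (tuned_bound_eq (exp 1) (ln (INR K)) (exp 1 * INR K * INR T / 2) D beta eta)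
    by (auto using exp_pos; lra).
  apply (skipper_dew_regret_le K T l d beta); auto; lia.
Qed.
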